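(* Let $\mathrm{opt}$ be the cost of an optimal solution and $\mathrm{opt}_{LP}$ the optimum value of the linear program LP-CVRP-MD described in the context, and let $(x,z)$ be an optimal solution of that LP. Define $\delta$ by $\sum_{r \in R}\sum_{v \in C} 2\,c(v,r)\, z^r_{v,v} = (1-\delta)\,\mathrm{opt}_{LP}$. Then $\mathrm{opt}_{LP} \le \mathrm{opt}$ and $\mathrm{lb} \le (1-\delta)\,\mathrm{opt}_{LP}$, where $\mathrm{lb} = \frac{2}{k}\sum_{v \in C} c(v,R)$.
   Context: Problem (Capacitated Vehicle Routing with Multiple Depots): nonempty disjoint finite sets $C$ (clients) and $R$ (depots), $V = C \cup R$, a metric $c$ on $V$, and an integer capacity $k \ge 1$. A feasible solution is a collection of tours, each starting and ending at a depot and visiting at most $k$ clients, such that every client is on some tour; its cost is the total edge cost; $\mathrm{opt}$ is the minimum cost. It is assumed that $c(v,R) := \min_{r \in R} c(v,r) > 0$ for every client $v$. Consider the complete bidirected graph on $V$ (each unordered pair $\{a,b\}$ gives directed edges $(a,b)$ and $(b,a)$, each of cost $c(a,b)$). For a vector $y$ on directed edges and $S \subseteq V$, $y(\delta^{in}(S))$ and $y(\delta^{out}(S))$ denote the sums of $y$ over directed edges entering, resp. leaving, $S$ (for a single vertex $u$ write $\delta^{in}(u)$, $\delta^{out}(u)$). LP-CVRP-MD has variables $x^r_{v,e} \ge 0$ for $r \in R$, $v \in C$, directed edges $e$, and $z^r_{v,u} \ge 0$ for $r \in R$, $v \in C$, $u \in V$; write $x^r_v$ for the vector $(x^r_{v,e})_e$.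 It minimizes $\sum_{r \in R}\sum_{v \in C}\sum_e c(e)\, x^r_{v,e}$ subject to: (1) for all $r \in R$, $v \in C$, $u \in V$: $x^r_v(\delta^{out}(u))$ equals $2 z^r_{v,v}$ if $u = r$, equals $0$ if $u = v$, and equals $z^r_{v,u}$ otherwise; (2) for all $r \in R$, $v \in C$, $u \in V$: $x^r_v(\delta^{in}(u))$ equals $0$ if $u = r$, equals $2 z^r_{v,v}$ if $u = v$, and equals $z^r_{v,u}$ otherwise; (3) $x^r_v(\delta^{in}(S)) \ge z^r_{v,u}$ for all $r \in R$, $v \in C$, $u \in V$ and all $S$ with $u \in S \subseteq V \setminus \{r\}$; (4) $\sum_{r \in R}\sum_{v \in C} z^r_{v,u} = 1$ for every client $u \in C$; (5) $z^r_{v,u} \le z^r_{v,v}$ for all $r \in R$, $u,v \in C$; (6) $z^r_{v,u} = 0$ for all $r \in R$, $u,v \in C$ with $c(u,r) > c(v,r)$; (7) $\sum_{u \in C} z^r_{v,u} \le k\, z^r_{v,v}$ for all $r \in R$, $v \in C$. Its optimum value is $\mathrm{opt}_{LP}$. *)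

From HB Require Import structures.
From mathcomp Require Import all_boot all_order all_algebra.
Set Implicit Arguments. Unset Strict Implicit. Unset Printing Implicit Defensive.
Import Order.TTheory GRing.Theory Num.Theory.
Local Open Scope ring_scope.

Section CVRPMD.
Variables (F : realFieldType) (V : finType).

Definition is_metric (c : V -> V -> F) : Prop :=
  [/\ forall a b, 0 <= c a b,
      forall a b, c a b = 0 <-> a = b,
      forall a b, c a b = c b a &
      forall a b w, c a w <= c a b + c b w].

(* c(v, D) = min_{r in D} c(v, r)  (0 if D is empty, never used then) *)
Definition distS (c : V -> V -> F) (D : {set V}) (v : V) : F :=
  if [pick r in D] is Some r0 then \big[Num.min/c v r0]_(r in D) c v r else 0.

(* A tour is a depot r and the sequence s of vertices visited in between:
   the closed walk r -> s_1 -> ... -> s_m -> r. *)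
Definition tour := (V * seq V)%type.

Definition tour_cost (c : V -> V -> F) (t : tour) : F :=
  \sum_(e <- zip (t.1 :: t.2) (rcons t.2 t.1)) c e.1 e.2.

Definition tour_clients (C : {set V}) (t : tour) : {set V} :=
  [set w in C | w \in t.2].

Definition cvrp_feasible (C D : {set V}) (k : nat) (sol : seq tour) : Prop :=
  (forall t, t \in sol -> t.1 \in D /\ (#|tour_clients C t| <= k)%N) /\
  (forall u, u \in C -> exists2 t, t \in sol & u \in t.2).

Definition sol_cost (c : V -> V -> F) (sol : seq tour) : F :=
  \sum_(t <- sol) tour_cost c t.

(* LP variables: x r v a b  is x^r_{v,(a,b)}  (directed edge (a,b), a != b),
                 z r v u    is z^r_{v,u}. *)
Definition lpx := V -> V -> V -> V -> F.
Definition lpz := V -> V -> V -> F.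

Definition xout (x : lpx) r v u : F := \sum_(w | w != u) x r v u w.
Definition xin (x : lpx) r v u : F := \sum_(w | w != u) x r v w u.
Definition xinS (x : lpx) r v (S : {set V}) : F :=
  \sum_(a in ~: S) \sum_(b in S) x r v a b.

Definition lp_cost (c : V -> V -> F) (C D : {set V}) (x : lpx) : F :=
  \sum_(r in D) \sum_(v in C) \sum_a \sum_(b | a != b) c a b * x r v a b.

Definition lp_feasible (c : V -> V -> F) (C D : {set V}) (k : nat)
    (x : lpx) (z : lpz) : Prop :=
  (      (forall r v a b, r \in D -> v \in C -> a != b -> 0 <= x r v a b) /\
      (forall r v u, r \in D -> v \in C -> 0 <= z r v u) /\
      (* (1) *)
      (forall r v u, r \in D -> v \in C ->
         xout x r v u = if u == r then 2 * z r v v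
                        else if u == v then 0 else z r v u) /\
      (* (2) *)
      (forall r v u, r \in D -> v \in C ->
         xin x r v u = if u == r then 0
                       else if u == v then 2 * z r v v else z r v u) /\
      (* (3) *)
      (forall r v u (S : {set V}), r \in D -> v \in C ->
         u \in S -> S \subset ~: [set r] -> z r v u <= xinS x r v S) /\
      (* (4) *)
      (forall u, u \in C -> \sum_(r in D) \sum_(v in C) z r v u = 1) /\
      (* (5) *)
      (forall r u v, r \in D -> u \in C -> v \in C -> z r v u <= z r v v) /\
      (* (6) *)
      (forall r u v, r \in D -> u \in C -> v \in C -> c u r > c v r ->
         z r v u = 0) /\
      (* (7) *)
      (forall r v, r \in D -> v \in C ->
         \sum_(u in C) z r v u <= k%:R * z r v v)).

Definition lp_optimal c C D k x z : Prop :=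
  lp_feasible c C D k x z /\
  forall x' z', lp_feasible c C D k x' z' -> lp_cost c C D x <= lp_cost c C D x'.

End CVRPMD.

From HB Require Import structures.
From mathcomp Require Import all_boot all_order all_algebra zify ring.
Set Implicit Arguments. Unset Strict Implicit. Unset Printing Implicit Defensive.
Import Order.TTheory GRing.Theory Num.Theory.
Local Open Scope ring_scope.

(* Shortcutting a feasible solution, so that each tour visits only clients not
   served before and each of them once, does not increase its cost, by the
   triangle inequality.  Such a tour from the depot r through the clients s
   yields an integral LP solution supported on the single commodity (r, v),
   where v is the client of s farthest from r: cut the tour at v into two
   r-v legs, let x^r_v count the edges of both legs and set z^r_{v,u} = [u in s].
   Flow conservation holds because the legs are simple paths, every cut
   separating a client of s from r is crossed by a leg, and constraint (6)
   holds by the choice of v.  Summing over the tours gives opt_LP <= opt.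
   For the lower bound, constraint (4) spreads each c(u,R) over the z^r_{v,u};
   whenever z^r_{v,u} > 0, (6) gives c(u,R) <= c(u,r) <= c(v,r), and (7) bounds
   the z-mass of the commodity (r, v) by k z^r_{v,v}. *)

Section PathEdges.
Variable T : eqType.

Fixpoint edges (p : seq T) : seq (T * T) :=
  if p is x :: q then if q is y :: _ then (x, y) :: edges q else [::] else [::].

Definition leaving (u : T) (e : T * T) := (e.1 == u) && (e.2 != u).
Definition entering (u : T) (e : T * T) := (e.2 == u) && (e.1 != u).

Lemma count_leaving_edges u x q : uniq (x :: q) ->
  (count (leaving u) (edges (x :: q)) + (last x q == u) = count_mem u (x :: q))%N.
Proof.
elim: q x => [|y q IH] x /=; first by rewrite addn0.
rewrite in_cons negb_or => /andP[/andP[xy _] uq].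
rewrite -addnA IH // /leaving /=.
by case: eqP => // <-; rewrite eq_sym xy.
Qed.

Lemma count_entering_edges u x q : uniq (x :: q) ->
  (count (entering u) (edges (x :: q)) + (x == u) = count_mem u (x :: q))%N.
Proof.
elim: q x => [|y q IH] x; first by rewrite /= addn0.
rewrite cons_uniq in_cons negb_or => /andP[/andP[xy _] uq].
have /= := IH y uq; rewrite /entering /= => <-.
by case: (eqVneq y u) => [<-|]; rewrite ?(negPf xy) /=; lia.
Qed.

Lemma count_crossing_edges (P : pred T) x q u : ~~ P x -> u \in x :: q -> P u ->
  (0 < count (fun e => ~~ P e.1 && P e.2) (edges (x :: q)))%N.
Proof.
elim: q x => [|y q IH] x /= Px; first by rewrite inE => /eqP-> Pu; rewrite Pu in Px.
rewrite in_cons => /orP[/eqP-> Pu|uq Pu]; first by rewrite Pu in Px.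
by case Py: (P y); rewrite /= ?Px ?Py // add0n IH ?Py.
Qed.

End PathEdges.

Section EdgeCount.
Variables (R : pzSemiRingType) (V : finType).

Definition edge_count (l : seq (V * V)) a b : R := (count (pred1 (a, b)) l)%:R.

Lemma sum_edge_count (f : V -> V -> R) l :
  \sum_a \sum_b f a b * edge_count l a b = \sum_(e <- l) f e.1 e.2.
Proof.
rewrite pair_big /=.
under eq_bigr do rewrite /edge_count -sum1_count natr_sum mulr_sumr.
rewrite (exchange_big_dep predT) //=; apply: eq_bigr => e _.
by rewrite (big_pred1 e) ?mulr1 // => -[a b]; rewrite eq_sym.
Qed.

Lemma sum_edge_count_pred (P : pred (V * V)) l :
  \sum_a \sum_b (P (a, b))%:R * edge_count l a b = (count P l)%:R.
Proof.
rewrite sum_edge_count -sum1_count natr_sum [RHS]big_mkcond /=.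
by apply: eq_bigr => -[a b] _; case: (P (a, b)); rewrite ?mul1r ?mul0r.
Qed.

Lemma edge_count_out l u :
  \sum_(w | w != u) edge_count l u w = (count (leaving u) l)%:R.
Proof.
rewrite -sum_edge_count_pred [RHS](bigD1 u) //= [X in _ + X]big1 ?addr0 => [|a /negPf au].
  rewrite [LHS]big_mkcond; apply: eq_bigr => b _; rewrite /leaving /= eqxx.
  by case: (b != u); rewrite ?mul1r ?mul0r.
by rewrite big1 // => b _; rewrite /leaving /= au mul0r.
Qed.

Lemma edge_count_in l u :
  \sum_(w | w != u) edge_count l w u = (count (entering u) l)%:R.
Proof.
rewrite -sum_edge_count_pred [LHS]big_mkcond; apply: eq_bigr => a _.
rewrite [RHS](bigD1 u) //= big1 ?addr0 => [|b /negPf bu].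
  by rewrite /entering /= eqxx; case: (a != u); rewrite ?mul1r ?mul0r.
by rewrite /entering /= bu mul0r.
Qed.

Lemma edge_count_cut l (S : {set V}) :
  \sum_(a in ~: S) \sum_(b in S) edge_count l a b =
  (count (fun e => (e.1 \notin S) && (e.2 \in S)) l)%:R.
Proof.
rewrite -sum_edge_count_pred [LHS]big_mkcond; apply: eq_bigr => a _.
rewrite in_setC; case: (a \in S) => /=; last rewrite big_mkcond.
  by rewrite big1 // => b _; rewrite mul0r.
by apply: eq_bigr => b _; case: (b \in S); rewrite ?mul1r ?mul0r.
Qed.

End EdgeCount.

Arguments edge_count {R V} l a b.

Section PathCost.
Variables (R : numDomainType) (T : eqType) (c : T -> T -> R).
Hypothesis c0 : forall a, c a a = 0.
Hypothesis csym : forall a b, c a b = c b a.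
Hypothesis ctri : forall a b w, c a w <= c a b + c b w.

Definition path_cost (p : seq T) := \sum_(e <- edges p) c e.1 e.2.

Lemma path_cost_cons2 x y q : path_cost [:: x, y & q] = c x y + path_cost (y :: q).
Proof. by rewrite /path_cost /= big_cons. Qed.

Lemma path_cost_cons x p : path_cost (x :: p) = c x (head x p) + path_cost p.
Proof.
by case: p => [|y q]; rewrite ?path_cost_cons2 // /path_cost /= big_nil c0 addr0.
Qed.

Lemma path_cost_rcons p x : path_cost (rcons p x) = path_cost p + c (last x p) x.
Proof.
elim: p => [|y p IH]; first by rewrite /path_cost /= big_nil c0 addr0.
rewrite rcons_cons !path_cost_cons IH addrA.
by case: p {IH} => [|z p] //=; rewrite !c0 /path_cost big_nil !addr0 add0r.
Qed.

Lemma path_cost_cat p x q :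
  path_cost (p ++ x :: q) = path_cost (rcons p x) + path_cost (x :: q).
Proof.
elim: p => [|y p IH]; first by rewrite /path_cost /= big_nil add0r.
rewrite cat_cons rcons_cons !(path_cost_cons y) IH addrA.
by case: p {IH}.
Qed.

Lemma path_cost_rev p : path_cost (rev p) = path_cost p.
Proof.
elim: p => [|x q IH] //; rewrite rev_cons path_cost_rcons IH path_cost_cons csym addrC.
by case: q {IH} => [|y q]; rewrite ?rev_cons ?last_rcons.
Qed.

Lemma path_cost_skip a x s b :
  path_cost (a :: rcons s b) <= path_cost [:: a, x & rcons s b].
Proof. by case: s => [|h s]; rewrite /= !path_cost_cons2 addrA lerD2r ctri. Qed.

Lemma path_cost_shortcut s' s a b :
  subseq s' s -> path_cost (a :: rcons s' b) <= path_cost (a :: rcons s b).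
Proof.
elim: s s' a => [|x s IH] [|y s'] a //= sub.
  exact: le_trans (IH [::] a (sub0seq s)) (path_cost_skip _ _ _ _).
move: sub; case: eqP => [<- sub|_ sub]; first by rewrite !path_cost_cons2 lerD2l IH.
exact: le_trans (IH _ a sub) (path_cost_skip _ _ _ _).
Qed.
End PathCost.

Section Commodities.
Variables (F : realFieldType) (V : finType) (c : V -> V -> F).
Variables (C D : {set V}) (k : nat).

(* Constraints (1)-(3) and (5)-(7) of LP-CVRP-MD for the pair (r, v): only (4)
   couples different pairs. *)
Record commodity_feasible (x : lpx F V) (z : lpz F V) (r v : V) : Prop := {
  commodity_x_ge0 : forall a b, a != b -> 0 <= x r v a b;
  commodity_z_ge0 : forall u, 0 <= z r v u;
  commodity_out : forall u, xout x r v u =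
    if u == r then 2 * z r v v else if u == v then 0 else z r v u;
  commodity_in : forall u, xin x r v u =
    if u == r then 0 else if u == v then 2 * z r v v else z r v u;
  commodity_cut : forall u (S : {set V}), u \in S -> S \subset ~: [set r] ->
    z r v u <= xinS x r v S;
  commodity_z_le : forall u, u \in C -> z r v u <= z r v v;
  commodity_z_far : forall u, u \in C -> c u r > c v r -> z r v u = 0;
  commodity_capacity : \sum_(u in C) z r v u <= k%:R * z r v v }.

Lemma lp_feasible_of_commodities x z :
  (forall r v, r \in D -> v \in C -> commodity_feasible x z r v) ->
  (forall u, u \in C -> \sum_(r in D) \sum_(v in C) z r v u = 1) ->
  lp_feasible c C D k x z.
Proof.
move=> feas cover.
split; first by move=> r v a b rD vC; exact: commodity_x_ge0 (feas r v rD vC) a b.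
split; first by move=> r v u rD vC; exact: commodity_z_ge0 (feas r v rD vC) u.
split; first by move=> r v u rD vC; exact: commodity_out (feas r v rD vC) u.
split; first by move=> r v u rD vC; exact: commodity_in (feas r v rD vC) u.
split; first by move=> r v u S rD vC; exact: commodity_cut (feas r v rD vC) u S.
split; first exact: cover.
split; first by move=> r u v rD uC vC; exact: commodity_z_le (feas r v rD vC) u uC.
split; first by move=> r u v rD uC vC; exact: commodity_z_far (feas r v rD vC) u uC.
by move=> r v rD vC; exact: commodity_capacity (feas r v rD vC).
Qed.

Lemma commodity_feasible0 x z r v :
  (forall a b, x r v a b = 0) -> (forall u, z r v u = 0) ->
  commodity_feasible x z r v.
Proof.
move=> x0 z0; split=> [a b _|u|u|u|u S _ _|u _|u _ _|]; rewrite ?x0 ?z0 ?mulr0 //.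
- by rewrite /xout big1 // !if_same.
- by rewrite /xin big1 // !if_same.
- by rewrite /xinS; apply: sumr_ge0 => a _; apply: sumr_ge0 => b _; rewrite x0.
- by rewrite big1.
Qed.

Section CommoditySum.
Variables (I : eqType) (L : seq I) (xs : I -> lpx F V) (zs : I -> lpz F V).

Definition sum_lpx : lpx F V := fun r v a b => \sum_(i <- L) xs i r v a b.
Definition sum_lpz : lpz F V := fun r v u => \sum_(i <- L) zs i r v u.

Lemma commodity_feasible_sum r v :
  (forall i, i \in L -> commodity_feasible (xs i) (zs i) r v) ->
  commodity_feasible sum_lpx sum_lpz r v.
Proof.
move=> feas.
have xout_sum u : xout sum_lpx r v u = \sum_(i <- L) xout (xs i) r v u.
  by rewrite /xout exchange_big.
have xin_sum u : xin sum_lpx r v u = \sum_(i <- L) xin (xs i) r v u.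
  by rewrite /xin exchange_big.
have xinS_sum S : xinS sum_lpx r v S = \sum_(i <- L) xinS (xs i) r v S.
  by rewrite /xinS [RHS]exchange_big; apply: eq_bigr => a _; rewrite exchange_big.
split=> [a b ab|u|u|u|u S uS Sr|u uC|u uC far|].
- rewrite /sum_lpx big_seq; apply: sumr_ge0 => i iL.
  exact: commodity_x_ge0 (feas i iL) a b ab.
- rewrite /sum_lpz big_seq; apply: sumr_ge0 => i iL.
  exact: commodity_z_ge0 (feas i iL) u.
- rewrite xout_sum (eq_big_seq _ (fun i iL => commodity_out (feas i iL) u)) /sum_lpz.
  by case: eqP => _; [rewrite mulr_sumr | case: eqP => _ //; rewrite big1].
- rewrite xin_sum (eq_big_seq _ (fun i iL => commodity_in (feas i iL) u)) /sum_lpz.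
  by case: eqP => _; [rewrite big1 | case: eqP => _ //; rewrite mulr_sumr].
- rewrite xinS_sum /sum_lpz !big_seq; apply: ler_sum => i iL.
  exact: commodity_cut (feas i iL) u S uS Sr.
- rewrite /sum_lpz !big_seq; apply: ler_sum => i iL.
  exact: commodity_z_le (feas i iL) u uC.
- rewrite /sum_lpz big_seq big1 // => i iL.
  exact: commodity_z_far (feas i iL) u uC far.
rewrite /sum_lpz exchange_big mulr_sumr !big_seq; apply: ler_sum => i iL.
exact: commodity_capacity (feas i iL).
Qed.

Lemma lp_cost_sum : lp_cost c C D sum_lpx = \sum_(i <- L) lp_cost c C D (xs i).
Proof.
rewrite /lp_cost [RHS]exchange_big; apply: eq_bigr => r _.
rewrite [RHS]exchange_big; apply: eq_bigr => v _.
rewrite [RHS]exchange_big; apply: eq_bigr => a _.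
by rewrite [RHS]exchange_big; apply: eq_bigr => b _; rewrite mulr_sumr.
Qed.

Lemma sum_lpz_cover u : \sum_(r in D) \sum_(v in C) sum_lpz r v u =
  \sum_(i <- L) \sum_(r in D) \sum_(v in C) zs i r v u.
Proof.
by rewrite [RHS]exchange_big; apply: eq_bigr => r _; rewrite [RHS]exchange_big.
Qed.

End CommoditySum.
End Commodities.

Section Tours.
Variables (F : realFieldType) (V : finType) (c : V -> V -> F).
Variables (C D : {set V}) (k : nat).
Hypothesis c0 : forall a, c a a = 0.
Hypothesis csym : forall a b, c a b = c b a.

Lemma tour_costE r s : tour_cost c (r, s) = path_cost c (r :: rcons s r).
Proof.
have zipE x : zip (x :: s) (rcons s r) = edges (x :: rcons s r).
  by elim: s x => [|y q IH] x //=; rewrite IH.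
by rewrite /tour_cost zipE.
Qed.

Lemma edge_count_cost l :
  \sum_a \sum_(b | a != b) c a b * edge_count l a b = \sum_(e <- l) c e.1 e.2.
Proof.
rewrite -sum_edge_count; apply: eq_bigr => a _.
rewrite [RHS](bigD1 a) //= c0 mul0r add0r.
by apply: eq_bigl => b; rewrite eq_sym.
Qed.

Definition farthest (r : V) (s : seq V) := [arg max_(u > head r s in s) c u r]%O.

Lemma farthest_in r s : s != [::] -> farthest r s \in s.
Proof.
by case: s => [|x s] // _; rewrite /farthest; case: arg_maxP; rewrite ?mem_head.
Qed.

Lemma le_farthest r s u : u \in s -> c u r <= c (farthest r s) r.
Proof.
case: s => [|x s] // us; rewrite /farthest.
by case: arg_maxP => [|w _]; [rewrite mem_head | apply].
Qed.

Definition before_farthest r s := take (index (farthest r s) s) s.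
Definition after_farthest r s := drop (index (farthest r s) s).+1 s.
Definition outward_leg r s := r :: rcons (before_farthest r s) (farthest r s).
Definition return_leg r s := r :: rcons (rev (after_farthest r s)) (farthest r s).

Section SplitTour.
Variables (r : V) (s : seq V).
Hypotheses (s_ne : s != [::]) (s_uniq : uniq s) (r_notin_s : r \notin s).

Local Notation v := (farthest r s).
Local Notation a := (before_farthest r s).
Local Notation b := (after_farthest r s).

Lemma split_at_farthest : s = a ++ v :: b.
Proof.
have vs := farthest_in r s_ne.
rewrite /before_farthest /after_farthest -{1}(cat_take_drop (index v s) s).
by rewrite (drop_nth v) ?index_mem ?nth_index.
Qed.

Lemma split_at_farthest_uniq :
  [/\ r \notin a, r \notin b, r != v, v \notin a & v \notin b].
Proof.
have : uniq (a ++ v :: b) by rewrite -split_at_farthest.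
rewrite cat_uniq /= negb_or => /and4P[_ /andP[va _] vb _].
have : r \notin a ++ v :: b by rewrite -split_at_farthest.
by rewrite mem_cat inE !negb_or => /and3P[].
Qed.

Lemma uniq_outward_leg : uniq (outward_leg r s).
Proof.
have [ra _ rv va _] := split_at_farthest_uniq.
have : uniq (a ++ v :: b) by rewrite -split_at_farthest.
by rewrite /outward_leg /= mem_rcons inE negb_or rv ra rcons_uniq va cat_uniq => /andP[].
Qed.

Lemma uniq_return_leg : uniq (return_leg r s).
Proof.
have [_ rb rv _ vb] := split_at_farthest_uniq.
have : uniq (a ++ v :: b) by rewrite -split_at_farthest.
rewrite /return_leg /= mem_rcons inE negb_or rv mem_rev rb rcons_uniq mem_rev vb rev_uniq.
by rewrite cat_uniq => /and3P[_ _ /andP[]].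
Qed.

Lemma count_mem_outward_leg u :
  count_mem u (outward_leg r s) = ((r == u) + count_mem u a + (v == u))%N.
Proof. by rewrite /= -cats1 count_cat /= addn0 addnA. Qed.

Lemma count_mem_return_leg u :
  count_mem u (return_leg r s) = ((r == u) + count_mem u b + (v == u))%N.
Proof. by rewrite /= -cats1 count_cat count_rev /= addn0 addnA. Qed.

Lemma count_mem_split u :
  count_mem u s = (count_mem u a + (v == u) + count_mem u b)%N.
Proof. by rewrite {1}split_at_farthest count_cat /= addnA. Qed.

Lemma count_leaving_legs u :
  (count (leaving u) (edges (outward_leg r s))
     + count (leaving u) (edges (return_leg r s))
   = if u == r then 2 else if u == v then 0 else u \in s)%N.
Proof.
have := count_leaving_edges u uniq_return_leg.
have := count_leaving_edges u uniq_outward_leg.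
rewrite !last_rcons count_mem_outward_leg count_mem_return_leg.
move: (count _ (edges (outward_leg r s))) (count _ (edges (return_leg r s))) => o1 o2.
rewrite -(count_uniq_mem u s_uniq) count_mem_split.
have [/count_memPn ra /count_memPn rb rv /count_memPn va /count_memPn vb] :=
  split_at_farthest_uniq.
case: (eqVneq u r) => [->|_]; first by rewrite [v == r]eq_sym (negPf rv) ra rb /=; lia.
by case: (eqVneq u v) => [->|_]; rewrite ?va ?vb /=; lia.
Qed.

Lemma count_entering_legs u :
  (count (entering u) (edges (outward_leg r s))
     + count (entering u) (edges (return_leg r s))
   = if u == r then 0 else if u == v then 2 else u \in s)%N.
Proof.
have := count_entering_edges u uniq_return_leg.
have := count_entering_edges u uniq_outward_leg.
rewrite count_mem_outward_leg count_mem_return_leg.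
move: (count _ (edges (outward_leg r s))) (count _ (edges (return_leg r s))) => i1 i2.
rewrite -(count_uniq_mem u s_uniq) count_mem_split.
have [/count_memPn ra /count_memPn rb rv /count_memPn va /count_memPn vb] :=
  split_at_farthest_uniq.
case: (eqVneq u r) => [->|_]; first by rewrite [v == r]eq_sym (negPf rv) ra rb /=; lia.
by case: (eqVneq u v) => [->|_]; rewrite ?va ?vb /=; lia.
Qed.

Lemma crossing_legs u (S : {set V}) : u \in s -> u \in S -> r \notin S ->
  (0 < count (fun e => (e.1 \notin S) && (e.2 \in S)) (edges (outward_leg r s))
     + count (fun e => (e.1 \notin S) && (e.2 \in S)) (edges (return_leg r s)))%N.
Proof.
move=> us uS rS.
have cross q : u \in r :: q ->
    (0 < count (fun e => (e.1 \notin S) && (e.2 \in S)) (edges (r :: q)))%N.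
  by move=> uq; apply: (count_crossing_edges (P := mem S)) uq uS.
have : u \in a ++ v :: b by rewrite -split_at_farthest.
rewrite mem_cat inE => /or3P[ua|uv|ub].
- by rewrite ltn_addr // cross // inE mem_rcons inE ua !orbT.
- by rewrite ltn_addr // cross // inE mem_rcons inE uv orbT.
- by rewrite ltn_addl // cross // inE mem_rcons inE mem_rev ub !orbT.
Qed.

Lemma path_cost_legs :
  path_cost c (outward_leg r s) + path_cost c (return_leg r s) = tour_cost c (r, s).
Proof.
rewrite tour_costE {3}split_at_farthest rcons_cat -cat_cons (path_cost_cat c0).
by rewrite -(path_cost_rev c0 csym (v :: _)) rev_cons rev_rcons.
Qed.

End SplitTour.

Definition serves (T : tour V) r v :=
  [&& r == T.1, v == farthest T.1 T.2 & T.2 != [::]].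

Definition tour_lpx (T : tour V) : lpx F V := fun r v a b =>
  if serves T r v then edge_count (edges (outward_leg T.1 T.2)) a b
                       + edge_count (edges (return_leg T.1 T.2)) a b
  else 0.

Definition tour_lpz (T : tour V) : lpz F V := fun r v u =>
  if serves T r v then (u \in T.2)%:R else 0.

Lemma tour_commodity_feasible r s :
  s != [::] -> uniq s -> r \notin s -> (size s <= k)%N ->
  commodity_feasible c C k (tour_lpx (r, s)) (tour_lpz (r, s)) r (farthest r s).
Proof.
move=> s_ne s_uniq r_notin_s ks; set v := farthest r s.
have serve : serves (r, s) r v by rewrite /serves /= !eqxx s_ne.
have zv : tour_lpz (r, s) r v v = 1 by rewrite /tour_lpz serve farthest_in.
split=> [a b _|u|u|u|u S uS Sr|u _|u _ far|];
  rewrite ?zv ?mulr1 /xout /xin /xinS /tour_lpx /tour_lpz serve.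
- by rewrite addr_ge0 ?ler0n.
- by rewrite ler0n.
- rewrite big_split /= !edge_count_out -natrD.
  by rewrite count_leaving_legs //; case: (u == r) => //; case: (u == v).
- rewrite big_split /= !edge_count_in -natrD.
  by rewrite count_entering_legs //; case: (u == r) => //; case: (u == v).
- under eq_bigr do rewrite big_split.
  rewrite big_split /= !edge_count_cut -natrD ler_nat; case us: (u \in s) => //.
  apply: (crossing_legs s_ne us uS); apply/negP => rS.
  by move/subsetP/(_ r rS): Sr; rewrite !inE eqxx.
- by case: (u \in s).
- case us: (u \in s) => //.
  by move: far; rewrite ltNge le_farthest.
- rewrite -natr_sum ler_nat; apply: leq_trans ks.
  rewrite -(card_uniqP s_uniq) -sum1_card big_mkcond [X in (_ <= X)%N]big_mkcond /=.
  by apply: leq_sum => u _; case: (u \in C); case: (u \in s).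
Qed.

Definition proper_tour (T : tour V) :=
  [/\ T.1 \in D, uniq T.2, all (mem C) T.2 & (size T.2 <= k)%N].

Hypothesis CD_disjoint : [disjoint C & D].

Lemma tour_commodities_feasible T r v :
  proper_tour T -> commodity_feasible c C k (tour_lpx T) (tour_lpz T) r v.
Proof.
case: T => r0 s [/= r0D s_uniq sC ks].
case served: (serves (r0, s) r v); last first.
  by apply: commodity_feasible0 => *; rewrite /tour_lpx /tour_lpz served.
move/and3P: served => [/eqP-> /eqP-> s_ne]; apply: tour_commodity_feasible => //.
by apply/negP => /(allP sC) r0C; rewrite (disjointFr CD_disjoint r0C) in r0D.
Qed.

Lemma sum_serves T (g : V -> V -> F) : T.1 \in D -> all (mem C) T.2 ->
  \sum_(r in D) \sum_(v in C) (if serves T r v then g r v else 0) =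
  if T.2 != [::] then g T.1 (farthest T.1 T.2) else 0.
Proof.
move=> rD sC; case: ifP => s_ne; last first.
  by rewrite big1 // => r _; rewrite big1 // => v _; rewrite /serves s_ne !andbF.
rewrite (bigD1 T.1) //= [X in _ + X]big1 ?addr0 => [|r /andP[_ /negPf nr]]; last first.
  by rewrite big1 // => v _; rewrite /serves nr.
have vC : farthest T.1 T.2 \in C by apply: (allP sC); apply: farthest_in.
rewrite (bigD1 (farthest T.1 T.2)) //= [X in _ + X]big1 ?addr0 => [|v /andP[_ /negPf nv]].
  by rewrite /serves !eqxx s_ne.
by rewrite /serves nv andbF.
Qed.

Lemma tour_lpz_cover T u : proper_tour T ->
  \sum_(r in D) \sum_(v in C) tour_lpz T r v u = (u \in T.2)%:R.
Proof.
case=> rD _ sC _; rewrite (sum_serves (fun _ _ => (u \in T.2)%:R)) //.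
by case: ifP => // /negbFE/eqP->.
Qed.

Lemma lp_cost_tour T : proper_tour T -> lp_cost c C D (tour_lpx T) = tour_cost c T.
Proof.
case: T => r s [/= rD _ sC _].
have commodity_cost r' v :
    \sum_a \sum_(b | a != b) c a b * tour_lpx (r, s) r' v a b =
    if serves (r, s) r' v then tour_cost c (r, s) else 0.
  rewrite /tour_lpx; case: ifP => [/and3P[_ _ s_ne] | _]; last first.
    by rewrite big1 // => a _; rewrite big1 // => b _; rewrite mulr0.
  under eq_bigr do under eq_bigr do rewrite mulrDr.
  under eq_bigr do rewrite big_split.
  by rewrite big_split /= !edge_count_cost path_cost_legs.
rewrite /lp_cost; under eq_bigr do under eq_bigr do rewrite commodity_cost.
rewrite (sum_serves (fun _ _ => tour_cost c (r, s))) //.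
case: ifP => // /negbFE/eqP /= ->.
by rewrite tour_costE /path_cost /= big_cons big_nil c0 addr0.
Qed.

End Tours.

Section Shortcut.
Variables (F : realFieldType) (V : finType) (c : V -> V -> F).
Variables (C D : {set V}) (k : nat).
Hypothesis ctri : forall a b w, c a w <= c a b + c b w.

Fixpoint shortcut (sol : seq (tour V)) (seen : seq V) : seq (tour V) :=
  if sol is t :: ts then
    let s := undup [seq w <- t.2 | (w \in C) && (w \notin seen)] in
    (t.1, s) :: shortcut ts (seen ++ s)
  else [::].

Lemma shortcut_proper sol seen :
  (forall t, t \in sol -> t.1 \in D /\ (#|tour_clients C t| <= k)%N) ->
  forall T, T \in shortcut sol seen -> proper_tour C D k T.
Proof.
elim: sol seen => [|t ts IH] seen // sol_ok T.
rewrite inE => /orP[/eqP-> | Tts]; last first.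
  by apply: IH Tts => t' t'ts; apply: sol_ok; rewrite inE t'ts orbT.
have [tD tk] := sol_ok t (mem_head _ _).
split => //=; first exact: undup_uniq.
  by apply/allP => w; rewrite mem_undup mem_filter => /andP[/andP[]].
rewrite -(card_uniqP (undup_uniq _)); apply: leq_trans tk.
apply: subset_leq_card; apply/subsetP => w.
by rewrite mem_undup mem_filter /tour_clients inE => /andP[/andP[-> _] ->].
Qed.

Lemma shortcut_cover sol seen u : u \in C ->
  \sum_(T <- shortcut sol seen) (u \in T.2)%:R =
  ((u \notin seen) && has (fun t : tour V => u \in t.2) sol)%:R :> F.
Proof.
move=> uC; elim: sol seen => [|t ts IH] seen /=; first by rewrite big_nil andbF.
rewrite big_cons IH /= mem_cat !mem_undup !mem_filter uC /=.
by case: (u \in seen); case: (u \in t.2); case: (has _ ts); rewrite /= ?add0r ?addr0.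
Qed.

Lemma shortcut_cost sol seen :
  \sum_(T <- shortcut sol seen) tour_cost c T <= sol_cost c sol.
Proof.
elim: sol seen => [|[r s] ts IH] seen /=; first by rewrite big_nil /sol_cost big_nil.
rewrite big_cons /sol_cost big_cons lerD ?IH // !tour_costE path_cost_shortcut //.
exact: subseq_trans (undup_subseq _) (filter_subseq _ _).
Qed.

End Shortcut.

Section Bounds.
Variables (F : realFieldType) (V : finType) (c : V -> V -> F).
Variables (C D : {set V}) (k : nat).

Hypothesis c_ge0 : forall a b, 0 <= c a b.
Hypothesis c0 : forall a, c a a = 0.
Hypothesis csym : forall a b, c a b = c b a.
Hypothesis ctri : forall a b w, c a w <= c a b + c b w.
Hypothesis CD_disjoint : [disjoint C & D].

Lemma exists_lp_le_sol_cost sol : cvrp_feasible C D k sol ->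
  exists x z, lp_feasible c C D k x z /\ lp_cost c C D x <= sol_cost c sol.
Proof.
move=> [sol_ok sol_cover].
set L := shortcut C sol [::].
have L_proper T : T \in L -> proper_tour C D k T by apply: shortcut_proper.
exists (sum_lpx L (tour_lpx c)), (sum_lpz L (tour_lpz c)); split.
  apply: lp_feasible_of_commodities => [r v _ _|u uC].
    apply: commodity_feasible_sum => T /L_proper.
    exact: tour_commodities_feasible.
  rewrite sum_lpz_cover (eq_big_seq _ (fun T TL => tour_lpz_cover c u (L_proper T TL))).
  rewrite shortcut_cover //; have [t tsol ut] := sol_cover u uC.
  by rewrite (introT hasP) //; exists t.
rewrite lp_cost_sum (eq_big_seq _ (fun T TL => lp_cost_tour c0 csym (L_proper T TL))).
exact: shortcut_cost.
Qed.

Lemma distS_le u r : r \in D -> distS c D u <= c u r.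
Proof.
rewrite /distS; case: pickP => [r0 _ rD|noD]; first exact: bigmin_le_cond.
by rewrite noD.
Qed.

Lemma lower_bound_le_radial x z : (0 < k)%N -> lp_feasible c C D k x z ->
  2 / k%:R * \sum_(u in C) distS c D u
    <= \sum_(r in D) \sum_(v in C) 2 * c v r * z r v v.
Proof.
move=> k_gt0 [_ [z_ge0 [_ [_ [_ [cover [_ [z_far capacity]]]]]]]].
have distS_split : \sum_(u in C) distS c D u =
    \sum_(r in D) \sum_(v in C) \sum_(u in C) z r v u * distS c D u.
  transitivity (\sum_(u in C) \sum_(r in D) \sum_(v in C) z r v u * distS c D u).
    apply: eq_bigr => u uC; rewrite -[LHS]mul1r -(cover u uC) mulr_suml.
    by apply: eq_bigr => r _; rewrite mulr_suml.
  by rewrite exchange_big; apply: eq_bigr => r _; rewrite exchange_big.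
have commodity_bound r v : r \in D -> v \in C ->
    \sum_(u in C) z r v u * distS c D u <= k%:R * z r v v * c v r.
  move=> rD vC; apply: (@le_trans _ _ (\sum_(u in C) z r v u * c v r)).
    apply: ler_sum => u uC; have [far|near] := ltP (c v r) (c u r).
      by rewrite z_far // !mul0r.
    by rewrite ler_wpM2l ?z_ge0 // (le_trans (distS_le u rD)).
  by rewrite -mulr_suml ler_wpM2r ?c_ge0 ?capacity.
rewrite distS_split mulr_sumr ler_sum // => r rD; rewrite mulr_sumr ler_sum // => v vC.
have k_neq0 : k%:R != 0 :> F by rewrite pnatr_eq0 -lt0n.
have -> : 2 * c v r * z r v v = 2 / k%:R * (k%:R * z r v v * c v r) by field.
by rewrite ler_wpM2l ?commodity_bound // divr_ge0 ?ler0n.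
Qed.

End Bounds.

Unset Implicit Arguments.

Theorem lemma2 (F : realFieldType) (V : finType) (C D : {set V})
    (c : V -> V -> F) (k : nat) (x : lpx F V) (z : lpz F V) (delta : F) :
  C != set0 -> D != set0 -> [disjoint C & D] -> C :|: D = setT ->
  is_metric c -> (1 <= k)%N ->
  (forall v, v \in C -> 0 < distS c D v) ->
  lp_optimal c C D k x z ->
  \sum_(r in D) \sum_(v in C) 2 * c v r * z r v v
    = (1 - delta) * lp_cost c C D x ->
  (forall sol : seq (tour V), cvrp_feasible C D k sol ->
     lp_cost c C D x <= sol_cost c sol) /\
  2 / k%:R * \sum_(v in C) distS c D v <= (1 - delta) * lp_cost c C D x.
Proof.
move=> _ _ CD_disjoint _ [c_ge0 c_eq0 csym ctri] k_gt0 _ [lp_ok lp_min] radial.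
have c0 a : c a a = 0 by apply/c_eq0.
split=> [sol sol_ok|]; last by rewrite -radial; exact: lower_bound_le_radial lp_ok.
have [x' [z' [lp_ok' le_sol]]] := exists_lp_le_sol_cost c0 csym ctri CD_disjoint sol_ok.
exact: le_trans (lp_min x' z' lp_ok') le_sol.
Qed.
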